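(* Finding the minimum of a sequence of $n$ distinct elements has deterministic fragile complexity $\Theta(\log(\mathrm{Runs}))$. That is: there is a deterministic comparison-based algorithm that finds the minimum such that every element participates in $O(\log(\mathrm{Runs}))$ comparisons, where $\mathrm{Runs}$ is the number of runs of the input; and for every value $r$ there are inputs with $\mathrm{Runs}=r$ on which any deterministic comparison-based algorithm forces some element to participate in $\Omega(\log r)$ comparisons.
   Context: A run of a sequence is a maximal contiguous ascending subsequence; $\mathrm{Runs}$ is the number of runs in the input sequence. The fragile complexity of a comparison-based algorithm is the maximum, over input elements, of the number of comparisons in which the element participates; the fragile complexity of a problem is the best possible fragile complexity of any algorithm solving it. Logarithms of a parameter $r$ are understood as $\log\max(r,2)$ so that bounds are at least constant. *)

From mathcomp Require Import all_boot.
Set Implicit Arguments. Unset Strict Implicit. Unset Printing Implicit Defensive.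

(* A deterministic comparison-based algorithm on inputs of size n is a
   comparison (decision) tree: an internal node [Cmp i j tl tg] compares the
   input elements at positions i and j and continues in [tl] if x_i < x_j,
   in [tg] otherwise; a leaf [Leaf k] outputs position k. *)
Inductive dtree (n : nat) : Type :=
| Leaf of 'I_n
| Cmp of 'I_n & 'I_n & dtree n & dtree n.

Fixpoint output n (t : dtree n) (x : 'I_n -> nat) : 'I_n :=
  match t with
  | Leaf k => k
  | Cmp i j tl tg => if x i < x j then output tl x else output tg x
  end.

Fixpoint ncmp n (t : dtree n) (x : 'I_n -> nat) (k : 'I_n) : nat :=
  match t with
  | Leaf _ => 0
  | Cmp i j tl tg =>
      ((k == i) || (k == j)) +
      (if x i < x j then ncmp tl x k else ncmp tg x k)
  end.

Definition fragile n (t : dtree n) (x : 'I_n -> nat) : nat :=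
  \max_(k < n) ncmp t x k.

Definition finds_min n (t : dtree n) : Prop :=
  forall x : 'I_n -> nat, injective x ->
    forall j : 'I_n, x (output t x) <= x j.

(* Number of runs (maximal contiguous ascending subsequences), counted by
   their starting positions: i starts a run iff i = 0 or x_(i-1) > x_i. *)
Definition runs n (x : 'I_n -> nat) : nat :=
  #|[set i : 'I_n | (i == 0 :> nat) ||
      [exists j : 'I_n, (j.+1 == i :> nat) && (x i < x j)]]|.

(* log r understood as log max(r,2), base 2 (floor). *)
Definition lg (r : nat) : nat := trunc_log 2 (maxn r 2).

From mathcomp Require Import all_boot zify.
Set Implicit Arguments. Unset Strict Implicit. Unset Printing Implicit Defensive.

(* Comparing every adjacent pair (x_i, x_(i+1)) finds the
   starting positions of all runs, and costs each element at most two
   comparisons.  The minimum of an injective input starts a run, so a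
   balanced knock-out tournament among the Runs run starts finds it, each
   player taking part in at most one match per round, i.e. in about
   log Runs comparisons.  Algorithms are assembled in continuation-passing
   style ([computes]), which makes their cost additive.

   An adversary keeps a weight on every element still alive
   (not yet known to exceed another element), with total weight r and
   weight(a) <= 2 ^ (comparisons of a).  When two alive elements meet, the
   lighter one is declared larger, dies, and hands its weight to the
   winner.  At the end a single element may be the minimum, so it carries
   weight r and took part in at least log r comparisons.  Starting with
   the odd positions of a sequence of length 2r already dead, every input
   consistent with the answers has exactly r runs. *)

Definition run_start n (x : 'I_n -> nat) (i : 'I_n) : bool :=
  (i == 0 :> nat) || [exists j : 'I_n, (j.+1 == i :> nat) && (x i < x j)].

Lemma runsE n (x : 'I_n -> nat) : runs x = #|[set i | run_start x i]|.
Proof. by []. Qed.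

Lemma min_run_start n (x : 'I_n -> nat) (m : 'I_n) :
  injective x -> (forall j, x m <= x j) -> run_start x m.
Proof.
move=> xinj xmin; apply/orP; case: (posnP m) => [-> | m0]; [by left | right].
have plt : m.-1 < n by apply: leq_ltn_trans (leq_pred m) (ltn_ord m).
apply/existsP; exists (Ordinal plt); rewrite /= prednK // eqxx /=.
rewrite ltn_neqAle xmin andbT; apply/eqP => /xinj /(congr1 val) /=; lia.
Qed.

Section UpperBound.
Variable n : nat.
Local Notation N := n.+1.
Local Notation tree := (dtree N).

(* [P] consumes a continuation [K]; on input x it behaves as [K r] after having
   charged [c k] comparisons to each element k. *)
Definition computes A (P : (A -> tree) -> tree) (x : 'I_N -> nat) (r : A)
    (c : 'I_N -> nat) : Prop :=
  forall K, output (P K) x = output (K r) x /\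
            forall k, ncmp (P K) x k = c k + ncmp (K r) x k.

Definition versus (P1 P2 : ('I_N -> tree) -> tree) (K : 'I_N -> tree) : tree :=
  P1 (fun a => P2 (fun b => Cmp a b (K a) (K b))).

Lemma computes_versus x P1 P2 r1 r2 c1 c2 :
  computes P1 x r1 c1 -> computes P2 x r2 c2 ->
  computes (versus P1 P2) x (if x r1 < x r2 then r1 else r2)
    (fun k => c1 k + c2 k + ((k == r1) || (k == r2))).
Proof.
move=> P1r P2r K; rewrite /versus.
have [out1 cost1] := P1r (fun a => P2 (fun b => Cmp a b (K a) (K b))).
have [out2 cost2] := P2r (fun b => Cmp r1 b (K r1) (K b)).
split; first by rewrite out1 out2 /=; case: ifP.
by move=> k; rewrite cost1 cost2 /=; case: ifP => _; lia.
Qed.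

Lemma versus_cost (L1 L2 : seq 'I_N) r1 r2 (c1 c2 : 'I_N -> nat) d k :
  uniq (L1 ++ L2) -> r1 \in L1 -> r2 \in L2 ->
  c1 k <= d * (k \in L1) -> c2 k <= d * (k \in L2) ->
  c1 k + c2 k + ((k == r1) || (k == r2)) <= d.+1 * (k \in L1 ++ L2).
Proof.
rewrite cat_uniq mem_cat => /and3P [_ disj _] r1L1 r2L2.
case k1: (k \in L1); case k2: (k \in L2) => /=.
- by case/hasP: disj; exists k.
- have /negbTE -> : k != r2 by apply: contraFneq k2 => ->.
  rewrite orbF; case: (k == r1) => /=; lia.
- have /negbTE -> : k != r1 by apply: contraFneq k1 => ->.
  case: (k == r2) => /=; lia.
- have /negbTE -> : k != r1 by apply: contraFneq k1 => ->.
  have /negbTE -> : k != r2 by apply: contraFneq k2 => ->.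
  lia.
Qed.

Fixpoint tourn (d : nat) (L : seq 'I_N) : ('I_N -> tree) -> tree :=
  match d with
  | 0 => fun K => K (head ord0 L)
  | d'.+1 => if size L <= 2 ^ d' then tourn d' L
             else versus (tourn d' (take (2 ^ d') L)) (tourn d' (drop (2 ^ d') L))
  end.

Lemma tourn_spec x d (L : seq 'I_N) : 0 < size L -> size L <= 2 ^ d -> uniq L ->
  exists r c, [/\ r \in L, {in L, forall y, x r <= x y},
    forall k, c k <= d * (k \in L) & computes (tourn d L) x r c].
Proof.
elim: d L => [|d IH] L.
  case: L => [|a [|b L]] //= _ _ _; exists a, (fun _ => 0).
  by split; rewrite ?inE // => y; rewrite inE => /eqP ->.
move=> L0 Ld uL /=; case: ifP => [Ld' | /negbT Lbig].
  have [r [c [rL rmin cd sp]]] := IH L L0 Ld' uL.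
  by exists r, c; split=> // k; apply: leq_trans (cd k) _; rewrite leq_mul2r leqnSn orbT.
rewrite -ltnNge in Lbig.
have eL : L = take (2 ^ d) L ++ drop (2 ^ d) L by rewrite cat_take_drop.
have take0 : 0 < size (take (2 ^ d) L) by rewrite size_take Lbig expn_gt0.
have takeD : size (take (2 ^ d) L) <= 2 ^ d by rewrite size_take Lbig.
have drop0 : 0 < size (drop (2 ^ d) L) by rewrite size_drop subn_gt0.
have dropD : size (drop (2 ^ d) L) <= 2 ^ d.
  by rewrite size_drop leq_subLR addnn -mul2n -expnS.
have [r1 [c1 [r1L min1 cd1 sp1]]] := IH _ take0 takeD (take_uniq _ uL).
have [r2 [c2 [r2L min2 cd2 sp2]]] := IH _ drop0 dropD (drop_uniq _ uL).
eexists _, _; split; last exact: computes_versus sp1 sp2.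
- by rewrite eL mem_cat; case: ifP => _; rewrite ?r1L ?r2L ?orbT.
- move=> y; rewrite eL mem_cat => /orP [] yL; case: ifP => lt.
  + exact: min1.
  + by have := min1 _ yL; lia.
  + by have := min2 _ yL; lia.
  + exact: min2.
- by move=> k; rewrite {1}eL; apply: versus_cost; rewrite -?eL.
Qed.

Fixpoint scan (l : seq nat) (acc : seq 'I_N) (K : seq 'I_N -> tree) : tree :=
  match l with
  | [::] => K acc
  | i :: l' => Cmp (inord i.+1) (inord i) (scan l' (rcons acc (inord i.+1)) K)
                                          (scan l' acc K)
  end.

Definition descents (x : 'I_N -> nat) (l : seq nat) : seq 'I_N :=
  [seq inord i.+1 | i <- l & x (inord i.+1) < x (inord i)].

Definition scan_cost (l : seq nat) (k : 'I_N) : nat :=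
  count (fun i => (k == inord i.+1) || (k == inord i)) l.

Lemma scan_spec x l acc :
  computes (scan l acc) x (acc ++ descents x l) (scan_cost l).
Proof.
elim: l acc => [|i l IH] acc K /=; first by rewrite cats0.
rewrite /descents /=; case: ifP => _.
  have [out cost] := IH (rcons acc (inord i.+1)) K.
  by split=> [|k]; rewrite ?out ?cost -cats1 -catA // /scan_cost /= addnA.
have [out cost] := IH acc K.
by split=> [|k]; rewrite ?out ?cost // /scan_cost /= addnA.
Qed.

Lemma count_hits_le1 (T U : eqType) (g : T -> U) (l : seq T) (u : U) :
  uniq (map g l) -> count (fun i => u == g i) l <= 1.
Proof.
move=> ul; rewrite (eq_count (a2 := preim g (pred1 u))) => [|i]; last exact: eq_sym.
by rewrite -count_map count_uniq_mem //; case: (_ \in _).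
Qed.

Lemma scan_cost_le2 k : scan_cost (iota 0 n) k <= 2.
Proof.
have uniq_shift s : s <= 1 -> uniq (map (fun i => inord (s + i) : 'I_N) (iota 0 n)).
  move=> s1; rewrite map_inj_in_uniq ?iota_uniq // => i j.
  rewrite !mem_iota /= => ilt jlt /(congr1 val) /=; rewrite !inordK; lia.
have hit1 : count (fun i => k == inord i.+1) (iota 0 n) <= 1.
  exact: count_hits_le1 (uniq_shift 1 isT).
have hit0 : count (fun i => k == inord i) (iota 0 n) <= 1.
  exact: count_hits_le1 (uniq_shift 0 isT).
change (count (predU (fun i => k == inord i.+1) (fun i => k == inord i)) (iota 0 n) <= 2).
have := count_predUI (fun i => k == inord i.+1) (fun i => k == inord i) (iota 0 n).
lia.
Qed.

Definition min_alg : tree :=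
  scan (iota 0 n) [:: ord0] (fun S => tourn (trunc_log 2 (size S)).+1 S (@Leaf N)).

Section RunStarts.
Variable x : 'I_N -> nat.

Let starts : seq 'I_N := ord0 :: descents x (iota 0 n).

Lemma mem_starts s : (s \in starts) = run_start x s.
Proof.
rewrite inE /run_start -[s == ord0](inj_eq val_inj) /=; congr (_ || _).
apply/mapP/existsP => [[i] | [j /andP [/eqP js lt]]].
  rewrite mem_filter mem_iota => /andP [lt /andP [_ ilt]] ->.
  by exists (inord i); rewrite !inordK ?eqxx //=; lia.
have jlt : j < n by have := ltn_ord s; lia.
have sj : s = inord j.+1 by apply: val_inj; rewrite /= inordK //; lia.
by exists (val j); rewrite // mem_filter mem_iota inord_val -sj lt /=.
Qed.

Lemma uniq_starts : uniq starts.
Proof.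
rewrite -(map_inj_uniq val_inj) /= /descents -map_comp.
have -> : [seq val (inord i.+1 : 'I_N) | i <- iota 0 n & x (inord i.+1) < x (inord i)]
        = [seq i.+1 | i <- iota 0 n & x (inord i.+1) < x (inord i)].
  apply/eq_in_map => i; rewrite mem_filter mem_iota => /andP [_ ilt] /=.
  by rewrite inordK //; lia.
rewrite map_inj_uniq ?filter_uniq ?iota_uniq ?andbT //; last exact: succn_inj.
by apply/mapP => -[].
Qed.

Lemma size_starts : size starts = runs x.
Proof.
rewrite runsE -(card_uniqP uniq_starts); apply: eq_card => s.
by rewrite inE mem_starts.
Qed.

(* The output beats every run start; each element pays at most 2 comparisons
   in the scan and 1 + log Runs in the tournament. *)
Lemma min_alg_spec :
  {in starts, forall y, x (output min_alg x) <= x y} /\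
  forall k, ncmp min_alg x k <= 3 + trunc_log 2 (runs x).
Proof.
have [scan_out scan_ncmp] := scan_spec x (iota 0 n) [:: ord0]
  (fun S => tourn (trunc_log 2 (size S)).+1 S (@Leaf N)).
rewrite cat1s -/starts in scan_out scan_ncmp.
have fits : size starts <= 2 ^ (trunc_log 2 (size starts)).+1.
  exact/ltnW/trunc_log_ltn.
have [r [c [_ rmin cd tourn_run]]] := tourn_spec x (isT : 0 < size starts) fits uniq_starts.
have [tourn_out tourn_ncmp] := tourn_run (@Leaf N).
split=> [y ys | k]; first by rewrite scan_out tourn_out rmin.
rewrite scan_ncmp tourn_ncmp -size_starts [ncmp (Leaf _) _ _]/= addn0.
have := scan_cost_le2 k; have := cd k; case: (k \in starts); rewrite ?muln1 ?muln0; lia.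
Qed.

(* Since the minimum starts a run, the output is the minimum. *)
Lemma min_alg_min : injective x -> forall j, x (output min_alg x) <= x j.
Proof.
move=> xinj j; have [m _ mmin] := arg_minnP x (isT : predT ord0).
have mstart : m \in starts by rewrite mem_starts min_run_start // => i; apply: mmin.
by apply: leq_trans (mmin j isT); apply: min_alg_spec.1.
Qed.

End RunStarts.

End UpperBound.

Lemma lg_ge1 r : 1 <= lg r.
Proof. by rewrite -(trunc_lognn (isT : 1 < 2)) leq_trunc_log // leq_maxr. Qed.

Lemma min_alg_finds_min n : finds_min (min_alg n).
Proof. by move=> x; apply: min_alg_min. Qed.

Lemma min_alg_fragile n (x : 'I_n.+1 -> nat) : fragile (min_alg n) x <= 4 * lg (runs x).
Proof.
apply/bigmax_leqP => k _; apply: leq_trans ((min_alg_spec x).2 k) _.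
have := lg_ge1 (runs x); have : trunc_log 2 (runs x) <= lg (runs x).
  by rewrite leq_trunc_log // leq_maxl.
lia.
Qed.

Section Adversary.
Variable N : nat.
Local Notation tree := (dtree N).

(* The adversary keeps the dead elements in a list D, most recently killed
   first.  Alive elements have rank 0; it commits to inputs increasing with
   rank, so earlier eliminations end up larger. *)
Definition rank (D : seq 'I_N) (u : 'I_N) : nat :=
  if u \in D then (index u D).+1 else 0.

Definition consistent (D : seq 'I_N) (x : 'I_N -> nat) : Prop :=
  forall u v, rank D u < rank D v -> x u < x v.

Definition refines (D D' : seq 'I_N) : Prop :=
  forall u v, rank D u < rank D v -> rank D' u < rank D' v.

Definition balanced (D : seq 'I_N) (w c : 'I_N -> nat) (r : nat) : Prop :=
  (forall a, a \notin D -> w a <= 2 ^ c a) /\ \sum_(a | a \notin D) w a = r.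

Definition charge (c : 'I_N -> nat) (i j : 'I_N) (a : 'I_N) : nat :=
  c a + ((a == i) || (a == j)).

Lemma refines_trans D1 D2 D3 : refines D1 D2 -> refines D2 D3 -> refines D1 D3.
Proof. by move=> r12 r23 u v /r12 /r23. Qed.

Lemma consistent_refines D D' x : refines D D' -> consistent D' x -> consistent D x.
Proof. by move=> rDD' cx u v /rDD' /cx. Qed.

Lemma balanced_charge D w c r i j : balanced D w c r -> balanced D w (charge c i j) r.
Proof.
case=> wc wsum; split=> // a /wc /leq_trans; apply.
by rewrite leq_pexp2l // leq_addr.
Qed.

Lemma rank_tie D (i j : 'I_N) : rank D i = rank D j -> i != j -> i \notin D /\ j \notin D.
Proof.
rewrite /rank; case iD: (i \in D); case jD: (j \in D) => //= -[eij] ij.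
by move: ij; rewrite -(nth_index i iD) eij (nth_index i jD) eqxx.
Qed.

Lemma rank_cons D (j u : 'I_N) : j \notin D ->
  rank (j :: D) u = if u == j then 1 else rank D u + (u \in D).
Proof.
move=> jD; rewrite /rank in_cons /= eq_sym.
by case: (eqVneq u j) => //= _; case: (u \in D); rewrite ?addn1.
Qed.

Lemma refines_cons D (j : 'I_N) : j \notin D -> refines D (j :: D).
Proof.
move=> jD u v uv; have vD : v \in D by move: uv; rewrite /rank; case: (v \in D).
have vj : (v == j) = false by apply: contraNF jD => /eqP <-.
rewrite !rank_cons // vj vD; move: uv; rewrite /rank vD.
by case: (u == j); case: (u \in D) => /=; lia.
Qed.

(* A match between alive i and the lighter alive j: j dies and its weight
   passes to i, which doubles at most i's weight for one more comparison. *)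
Lemma eliminate D w c r (i j : 'I_N) : i \notin D -> j \notin D -> i != j ->
  w j <= w i -> balanced D w c r ->
  [/\ balanced (j :: D) (fun a => if a == i then w i + w j else w a) (charge c i j) r,
      refines D (j :: D) & rank (j :: D) i < rank (j :: D) j].
Proof.
move=> iD jD ij wji [wc wsum]; split; last 2 first.
- exact: refines_cons.
- by rewrite !rank_cons // eqxx (negbTE ij) /rank (negbTE iD).
split.
  move=> a; rewrite in_cons negb_or => /andP [aj aD]; rewrite /charge.
  case: (eqVneq a i) => [-> | ai] /=.
    by rewrite addn1 expnS; have := wc _ iD; lia.
  by rewrite (negbTE aj) addn0; apply: wc.
rewrite -wsum [RHS](bigD1 i) //= (bigD1 j (P := fun a => (a \notin D) && (a != i))) /=;
  last by rewrite jD eq_sym.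
rewrite [LHS](bigD1 i) /=; last by rewrite in_cons negb_or iD andbT; apply: contraNneq ij => ->.
rewrite eqxx -addnA; congr (_ + (_ + _)); apply: eq_big => a.
  by rewrite in_cons negb_or; case: (a == j); case: (a \in D); case: (a == i).
by move=> /andP [_ /negbTE ->].
Qed.

Lemma answer D w c r (i j : 'I_N) : balanced D w c r ->
  exists b D' w', [/\ balanced D' w' (charge c i j) r, refines D D' &
                      forall x, consistent D' x -> (x i < x j) = b].
Proof.
move=> bal; have balc := balanced_charge i j bal.
case: (ltngtP (rank D i) (rank D j)) => [ij | ji | tie].
- by exists true, D, w; split=> // x /(_ _ _ ij).
- exists false, D, w; split=> // x /(_ _ _ ji) xji.
  by apply/negbTE; rewrite -leqNgt ltnW.
case: (eqVneq i j) => [eij | ij].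
  subst j; by exists false, D, w; split=> // x _; rewrite ltnn.
have [iD jD] := rank_tie tie ij.
case: (leqP (w j) (w i)) => [wji | /ltnW wij].
  have [bal' ref rk] := eliminate iD jD ij wji bal.
  by eexists true, _, _; split; [exact: bal' | exact: ref | move=> x /(_ _ _ rk)].
have ji : j != i by rewrite eq_sym.
have [[wc wsum] ref rk] := eliminate jD iD ji wij bal.
eexists false, _, _; split; [split; last exact: wsum | exact: ref |].
  by move=> a /wc; rewrite /charge orbC.
by move=> x /(_ _ _ rk) xji; apply/negbTE; rewrite -leqNgt ltnW.
Qed.

Definition forces (t : tree) D c r : Prop :=
  exists D' w' c' o, [/\ balanced D' w' c' r, refines D D' &
    forall x, consistent D' x -> output t x = o /\ forall k, c k + ncmp t x k = c' k].

Lemma adversary (t : tree) D w c r : balanced D w c r -> forces t D c r.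
Proof.
elim: t D w c => [o | i j tl IHl tg IHg] D w c bal.
  by exists D, w, c, o; split=> // x _; split=> // k; rewrite addn0.
have [b [D1 [w1 [bal1 ref1 ans]]]] := answer i j bal.
have IHb D2 w2 c2 : balanced D2 w2 c2 r -> forces (if b then tl else tg) D2 c2 r.
  by case: b {ans}; [apply: IHl | apply: IHg].
have [D' [w' [c' [o [bal' ref' run]]]]] := IHb _ _ _ bal1.
exists D', w', c', o; split=> [//|| x cx]; first exact: refines_trans ref1 ref'.
have [out cost] := run x cx; have xb := ans x (consistent_refines ref' cx).
split=> [|k]; rewrite /= xb; case: b {ans run xb IHb} out cost => /= out cost //.
all: by rewrite addnA; apply: cost.
Qed.

Lemma witness_input D (a : 'I_N) : a \notin D ->
  exists x : 'I_N -> nat, [/\ injective x, consistent D x & forall u, u != a -> x a < x u].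
Proof.
move=> aD; pose tag (u : 'I_N) := if u == a then 0 else (val u).+1.
have tag_lt u : tag u < N.+1 by rewrite /tag; case: ifP => // _; exact: ltn_ord.
exists (fun u => rank D u * N.+1 + tag u); split.
- move=> u v /(congr1 (modn^~ N.+1)) /=; rewrite !modnMDl !modn_small // /tag.
  case: (eqVneq u a) => [-> | ua]; case: (eqVneq v a) => [-> | va] //.
  by move=> [] /val_inj.
- move=> u v uv; have := tag_lt u.
  have : (rank D u).+1 * N.+1 <= rank D v * N.+1 by rewrite leq_mul2r uv orbT.
  rewrite mulSn; lia.
- by move=> u ua; rewrite /rank (negbTE aD) /tag eqxx (negbTE ua); lia.
Qed.

(* A correct algorithm must leave a single alive element, carrying total
   weight r; hence it compared that element at least log r times. *)
Lemma adversary_bound (t : tree) D w r : finds_min t -> 0 < r ->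
  balanced D w (fun _ => 0) r ->
  exists x, [/\ injective x, consistent D x & r <= 2 ^ fragile t x].
Proof.
move=> tmin r0 bal.
have [D' [w' [c' [o [[wc wsum] ref run]]]]] := adversary t bal.
have survivor a : a \notin D' -> a = o.
  move=> aD; have [x [xinj cx amin]] := witness_input aD.
  have [out _] := run x cx; have := tmin x xinj a; rewrite out.
  by case: (eqVneq o a) => [-> // | /amin]; lia.
have oD : o \notin D'.
  case: (pickP (fun a => a \notin D')) => [a /[dup] /survivor -> //| none].
  by move: wsum r0; rewrite big_pred0 // => <-.
have wo : w' o = r.
  by rewrite -wsum (big_pred1 o) // => a; apply/idP/eqP => [/survivor | ->].
have [x [xinj cx _]] := witness_input oD.
exists x; split=> //; first exact: consistent_refines ref cx.
have [_ cost] := run x cx; rewrite -wo (leq_trans (wc o oD)) // -cost add0n.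
by rewrite leq_pexp2l // (leq_bigmax o).
Qed.

End Adversary.

Lemma fragile_pos N (t : dtree N) (a b : 'I_N) : a != b -> finds_min t ->
  forall x, 0 < fragile t x.
Proof.
move=> ab tmin x; case: t tmin => [o | i j tl tg] tmin; last first.
  by apply: leq_trans (leq_bigmax i); rewrite /= eqxx.
pose c := if o == a then b else a.
have oc : o != c by rewrite /c; case: (eqVneq o a) => // ->.
have [y [yinj _ cmin]] := witness_input (isT : c \notin [::]).
by have /= := tmin y yinj c; have := cmin o oc; lia.
Qed.

Lemma card_evens N r : N = r.*2 -> #|[pred a : 'I_N | ~~ odd a]| = r.
Proof.
move=> ->; rewrite -sum1_card -(big_mkord (fun a => ~~ odd a) (fun _ => 1)) big_mkcond /=.
elim: r => [|r IH]; first by rewrite big_geq.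
by rewrite doubleS !big_nat_recr //= IH odd_double /= addn0 addn1.
Qed.

Lemma run_start_alternating n (x : 'I_n.+1 -> nat) (i : 'I_n.+1) :
  (forall u v : 'I_n.+1, ~~ odd u -> odd v -> x u < x v) -> run_start x i = ~~ odd i.
Proof.
move=> low_high; rewrite /run_start; case: (posnP i) => [-> // | i0] /=.
apply/existsP/idP => [[j /andP [/eqP ji xij]] | ie].
  apply: contraT; rewrite negbK => io.
  have je : ~~ odd j by move: io; rewrite -ji.
  by have := low_high _ _ je io; lia.
have plt : i.-1 < n.+1 by apply: leq_ltn_trans (leq_pred i) (ltn_ord i).
exists (Ordinal plt); rewrite /= prednK // eqxx low_high //.
by move: ie; rewrite -{1}(prednK i0) /= negbK.
Qed.

Lemma lg_le r f : 0 < f -> r <= 2 ^ f -> lg r <= f.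
Proof.
move=> f0 rf; rewrite -(trunc_expnK f (isT : 1 < 2)) leq_trunc_log // geq_max rf.
by rewrite -{1}(expn1 2) leq_pexp2l.
Qed.

Lemma lower_bound (A : forall n : nat, dtree n.+1) : (forall n, finds_min (A n)) ->
  forall r, 0 < r -> exists n (x : 'I_n.+1 -> nat),
    [/\ injective x, runs x = r & lg r <= fragile (A n) x].
Proof.
move=> Amin r r0; set n := (r.*2).-1.
have nN : n.+1 = r.*2 by rewrite /n prednK // double_gt0.
pose D := [seq u : 'I_n.+1 <- enum 'I_n.+1 | odd u].
have memD u : (u \in D) = odd u by rewrite mem_filter mem_enum andbT.
have bal : balanced D (fun _ => 1) (fun _ => 0) r.
  split=> //; rewrite sum1_card -(card_evens nN); apply: eq_card => u.
  by rewrite -topredE /= memD.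
have [x [xinj xD xfrag]] := adversary_bound (Amin n) r0 bal.
exists n, x; split=> //.
  rewrite runsE -(card_evens nN); apply: eq_card => i.
  rewrite !inE run_start_alternating // => u v ue vo; apply: xD.
  by rewrite /rank !memD (negbTE ue) vo.
have two : (ord0 : 'I_n.+1) != ord_max.
  by rewrite -(inj_eq val_inj) /= eq_sym -lt0n /n; move: r0; case: (r).
exact: lg_le (fragile_pos two (Amin n) x) xfrag.
Qed.

Theorem theorem5 :
  (* upper bound: an algorithm (family of comparison trees, one per input
     size n+1) finding the minimum with fragile complexity O(log Runs) *)
  (exists (C : nat) (A : forall n : nat, dtree n.+1),
      (forall n, finds_min (A n)) /\
      (forall n (x : 'I_n.+1 -> nat), injective x ->
         fragile (A n) x <= C * lg (runs x)))
  /\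
  (* lower bound: Omega(log r) for every r *)
  (exists d : nat, 0 < d /\
      forall A : forall n : nat, dtree n.+1,
        (forall n, finds_min (A n)) ->
        forall r : nat, 0 < r ->
          exists n (x : 'I_n.+1 -> nat),
            [/\ injective x, runs x = r & lg r <= d * fragile (A n) x]).
Proof.
split.
  exists 4, min_alg; split; first exact: min_alg_finds_min.
  by move=> n x _; apply: min_alg_fragile.
exists 1; split=> // A Amin r r0.
by have [n [x [xinj xruns xlg]]] := lower_bound Amin r0; exists n, x; rewrite mul1n.
Qed.
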